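(* For any finite point set $P\subset\mathbb{R}^1$ containing the source $s$ and any $1/2<\delta<1$, $$\mathrm{cost}_2(\rho_{\mathrm{sb}}(P))\le c_\delta\cdot\mathrm{OPT},\qquad c_\delta:=\max\Big(1+\delta+\frac{(1+5\delta)(1-\delta)^2}{\delta^2},\ \frac1{\delta^2}+\frac12\Big),$$ where $\mathrm{OPT}=\mathrm{cost}_2(\rho_{\mathrm{opt}}(P))$ is the cost of an optimal range assignment on $P$.
   Context: A range assignment $\rho$ on $P$ induces a directed graph with edge $(p,q)$ iff $|pq|\le\rho(p)$; it is feasible if the graph contains an arborescence rooted at $s$ spanning $P$; $\mathrm{cost}_2(\rho(P))=\sum_{p\in P}\rho(p)^2$; an optimal assignment is a feasible one of minimum cost. Points of $P$ left of $s$ are $\ell_1,\ell_2,\dots$ and right of $s$ are $r_1,r_2,\dots$, numbered by increasing distance from $s$. The successor $\mathrm{suc}(p)$ of $r_i$ is $r_{i+1}$ and of $\ell_i$ is $\ell_{i+1}$; $s$ has successors $r_1,\ell_1$; extreme (farthest) points have none ($\mathrm{nil}$). The standard range $\rho_{\mathrm{st}}(p)$ of $p\ne s$ is $|p\,\mathrm{suc}(p)|$, or $0$ if extreme. A point $p\ne s$ is expensive if $\mathrm{suc}(p)\ne\mathrm{nil}$ and $|p\,\mathrm{suc}(p)|>\delta|s\,\mathrm{suc}(p)|$, cheap otherwise; $s$ is always expensive. $d_{\max}=\max\{|s\,\mathrm{suc}(p)|:p\text{ expensive}\}$ (for $p=s$ both successors considered). The source-based assignment: $\rho_{\mathrm{sb}}(s)=d_{\max}$,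 $\rho_{\mathrm{sb}}(p)=0$ for expensive $p\ne s$, $\rho_{\mathrm{sb}}(p)=\rho_{\mathrm{st}}(p)$ for cheap $p$. *)

From HB Require Import structures.
From mathcomp Require Import all_boot all_order all_algebra.
From mathcomp Require Import reals.
Set Implicit Arguments. Unset Strict Implicit. Unset Printing Implicit Defensive.
Import Order.TTheory GRing.Theory Num.Theory.
Local Open Scope ring_scope.

Section RangeAssignment.
Variable R : realType.

Definition dist (p q : R) : R := `|p - q|.

Definition range_assignment (P : seq R) (rho : R -> R) : Prop :=
  forall p, p \in P -> 0 <= rho p.

Definition induced_edge (rho : R -> R) (p q : R) : Prop := dist p q <= rho p.

(* The induced graph contains an arborescence rooted at s spanning P:
   a parent map par on P\{s} whose edges (par p, p) are edges of the induced
   graph, and following parents from any point of P reaches the root s. *)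
Definition feasible (P : seq R) (s : R) (rho : R -> R) : Prop :=
  range_assignment P rho /\
  exists par : R -> R,
    (forall p, p \in P -> p != s -> par p \in P /\ induced_edge rho (par p) p) /\
    (forall p, p \in P -> exists n, iter n par p = s).

Definition cost2 (P : seq R) (rho : R -> R) : R := \sum_(p <- P) rho p ^+ 2.

Definition optimal (P : seq R) (s : R) (rho : R -> R) : Prop :=
  feasible P s rho /\ forall rho', feasible P s rho' -> cost2 P rho <= cost2 P rho'.

Definition sucR (P : seq R) (p : R) : option R :=
  if [seq x <- P | p < x] is x0 :: _ then
    Some (\big[Num.min/x0]_(x <- [seq x <- P | p < x]) x) else None.
Definition sucL (P : seq R) (p : R) : option R :=
  if [seq x <- P | x < p] is x0 :: _ then
    Some (\big[Num.max/x0]_(x <- [seq x <- P | x < p]) x) else None.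

(* successor of p <> s: r_i -> r_{i+1}, l_i -> l_{i+1}; None = nil (extreme) *)
Definition suc (P : seq R) (s p : R) : option R :=
  if s < p then sucR P p else sucL P p.

(* all successors of p (for s: r_1 and l_1, when they exist) *)
Definition sucs (P : seq R) (s p : R) : seq R :=
  if p == s then (if sucR P s is Some q then [:: q] else [::]) ++
                 (if sucL P s is Some q then [:: q] else [::])
  else (if suc P s p is Some q then [:: q] else [::]).

Definition rho_st (P : seq R) (s : R) (p : R) : R :=
  if suc P s p is Some q then dist p q else 0.

Definition expensive (P : seq R) (s delta : R) (p : R) : bool :=
  (p == s) ||
  (if suc P s p is Some q then delta * dist s q < dist p q else false).

Definition dmax (P : seq R) (s delta : R) : R :=
  \big[Num.max/0]_(p <- P | expensive P s delta p)
     \big[Num.max/0]_(q <- sucs P s p) dist s q.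

Definition rho_sb (P : seq R) (s delta : R) (p : R) : R :=
  if p == s then dmax P s delta
  else if expensive P s delta p then 0 else rho_st P s p.

Definition c_delta (delta : R) : R :=
  Num.max (1 + delta + (1 + 5 * delta) * (1 - delta) ^+ 2 / delta ^+ 2)
          (1 / delta ^+ 2 + 1 / 2).

End RangeAssignment.

From HB Require Import structures.
From mathcomp Require Import all_boot all_order all_algebra.
From mathcomp Require Import reals.
From mathcomp Require Import ring lra.
Set Implicit Arguments. Unset Strict Implicit. Unset Printing Implicit Defensive.
Import Order.TTheory GRing.Theory Num.Theory.
Local Open Scope ring_scope.

(* The cost of rho_sb is dmax^2 plus, for every cheap point p with a successor q, the
   square of the step |pq| = |sq| - |sp|.  Cutting a feasible arborescence between p and q
   yields a transmitter x that stands no farther from s than p on the side of p, or anywhere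
   on the other side, and whose range reaches q; charge p to the first such x.  Seen as
   intervals of distances from s, the steps charged to x are disjoint on each side, lie in
   [|sx|, |sx| + rho x] on the side of x and in [0, rho x - |sx|] on the other, and, p being
   cheap, have length at most delta |sq|; so their squares add up to at most
   (1 + delta) rho(x)^2.  The successor E of the expensive point realising dmax is covered
   in the same way by some x.  No cheap step crosses the gap before E, and that gap starts
   below (1 - delta) |sE|; this bounds dmax^2 plus the charge of x by the first term of
   c_delta times rho(x)^2. *)

Definition c_star (R : realFieldType) (d : R) : R :=
  1 + d + (1 + 5 * d) * (1 - d) ^+ 2 / d ^+ 2.

Lemma c_star_le_c_delta (R : realType) (d : R) : c_star d <= c_delta d.
Proof. by rewrite le_max lexx. Qed.

Section StarInequalities.
Variable R : realFieldType.
Implicit Types (d a r e D : R).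

Lemma c_star_ge d : 1 / 2 < d -> d < 1 -> 1 + d + d * (1 - d) ^+ 2 <= c_star d.
Proof.
move=> d_gt_half d_lt1; have d_gt0 : 0 < d by lra.
rewrite /c_star lerD2l ler_pdivlMr ?exprn_gt0 //.
have : 0 <= (1 - d) ^+ 2 by rewrite sqr_ge0.
have : d * d ^+ 2 <= 1 + 5 * d by nra.
nra.
Qed.

Lemma one_add_le_c_star d : 1 / 2 < d -> d < 1 -> 1 + d <= c_star d.
Proof.
move=> d_gt_half d_lt1; apply: le_trans (c_star_ge d_gt_half d_lt1).
by rewrite lerDl mulr_ge0 ?sqr_ge0 //; lra.
Qed.

Lemma star_other_side_le d a r e D : 1 / 2 < d -> d < 1 ->
  0 <= a -> 0 <= D -> D <= r - a -> 0 <= e -> e <= (1 - d) * D ->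
  D ^+ 2 + d * e * e + d * (r - a) * (r - a - D) + d * (a + r) * r <= c_star d * r ^+ 2.
Proof.
move=> d_gt_half d_lt1 a_ge0 D_ge0 D_le e_ge0 e_le.
have d_gt0 : 0 < d by lra.
set K := 1 + d * (1 - d) ^+ 2.
have K_ge1 : 1 <= K by rewrite /K lerDl mulr_ge0 ?sqr_ge0 //; lra.
have e_sq : d * (e * e) <= d * ((1 - d) * D * ((1 - d) * D)).
  by apply: ler_wpM2l; [lra | exact: ler_pM].
have shift_D : K * D ^+ 2 + d * (r - a) * (r - a - D) <= K * (r - a) ^+ 2.
  have : 0 <= (r - a - D) * ((K - d) * (r - a) + K * D) by apply: mulr_ge0; nra.
  nra.
have shift_a : K * (r - a) ^+ 2 + d * (a + r) * r <= (K + d) * r ^+ 2.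
  have : 0 <= a * (2 * K * r - K * a - d * r) by apply: mulr_ge0; nra.
  nra.
have : (K + d) * r ^+ 2 <= c_star d * r ^+ 2.
  by apply: ler_wpM2r; [exact: sqr_ge0 | have := c_star_ge d_gt_half d_lt1; rewrite /K; lra].
rewrite /K in e_sq shift_D shift_a *; lra.
Qed.

Lemma star_same_side_le d a r e D : 1 / 2 < d -> d < 1 ->
  0 <= a -> a <= e -> e <= (1 - d) * D -> D <= a + r ->
  D ^+ 2 + d * e * (e - a) + d * (a + r) * (a + r - D) + d * (r - a) * (r - a)
  <= c_star d * r ^+ 2.
Proof.
move=> d_gt_half d_lt1 a_ge0 a_le e_le D_le.
have d_gt0 : 0 < d by lra.
have d_lt1' : 0 < 1 - d by lra.
have c_star_lb := c_star_ge d_gt_half d_lt1.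
have sq_ge0 : 0 <= (1 - d) ^+ 2 by exact: sqr_ge0.
have e_mono : d * (e * (e - a)) <= d * ((1 - d) * D * ((1 - d) * D - a)).
  apply: ler_wpM2l; first lra.
  have : 0 <= ((1 - d) * D - e) * ((1 - d) * D + e - a) by apply: mulr_ge0; lra.
  nra.
pose l1 := a + r - D; pose l2 := ((1 - d) * D - a) / (1 - d); pose l3 := d * a / (1 - d).
pose slack := (c_star d - 2 * d) * l1 * l1
  + (1 - d) ^+ 2 * (1 + 5 * d - d ^+ 3) / d ^+ 2 * l2 * l2
  + 2 * (1 - d) ^+ 2 / d * l3 * l3 + (2 * c_star d - 3 * d) * l1 * l2
  + (2 * c_star d + 1 - 4 * d) * l1 * l3 + (1 - d) ^+ 2 * (2 + 8 * d - d ^+ 2) / d ^+ 2 * l2 * l3.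
(* at e = (1 - d) D the slack is a quadratic form in l1, l2, l3 >= 0 with coefficients >= 0 *)
have -> : c_star d * r ^+ 2 = D ^+ 2 + d * (1 - d) * D * ((1 - d) * D - a)
    + d * (a + r) * (a + r - D) + d * (r - a) ^+ 2 + slack.
  by rewrite /slack /l1 /l2 /l3 /c_star; field; rewrite gt_eqF ?lt0r_neq0.
have slack_ge0 : 0 <= slack.
  have l1_ge0 : 0 <= l1 by rewrite /l1; lra.
  have l2_ge0 : 0 <= l2 by rewrite /l2 divr_ge0 //; lra.
  have l3_ge0 : 0 <= l3 by rewrite /l3 divr_ge0 ?mulr_ge0 //; lra.
  have c11 : 0 <= c_star d - 2 * d by nra.
  have c22 : 0 <= (1 - d) ^+ 2 * (1 + 5 * d - d ^+ 3) / d ^+ 2.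
    by rewrite divr_ge0 ?sqr_ge0 // mulr_ge0 //; nra.
  have c33 : 0 <= 2 * (1 - d) ^+ 2 / d by rewrite divr_ge0 ?mulr_ge0 //; lra.
  have c12 : 0 <= 2 * c_star d - 3 * d by nra.
  have c13 : 0 <= 2 * c_star d + 1 - 4 * d by nra.
  have c23 : 0 <= (1 - d) ^+ 2 * (2 + 8 * d - d ^+ 2) / d ^+ 2.
    by rewrite divr_ge0 ?sqr_ge0 // mulr_ge0 //; nra.
  by rewrite /slack; repeat apply: addr_ge0; repeat apply: mulr_ge0 => //.
rewrite expr2; lra.
Qed.

End StarInequalities.

Section IntervalPacking.
Variables (R : realDomainType) (I : eqType).
Implicit Types (xs : seq I) (lo hi : I -> R).

Lemma sum_disjoint_intervals_le xs lo hi (a b : R) : uniq xs -> a <= b ->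
  {in xs, forall x, a <= lo x /\ lo x <= hi x /\ hi x <= b} ->
  {in xs &, forall x y, x != y -> hi x <= lo y \/ hi y <= lo x} ->
  \sum_(x <- xs) (hi x - lo x) <= b - a.
Proof.
elim: (size xs).+1 {-2}xs (ltnSn (size xs)) a b => // n IH [|x0 ys] /=.
  by move=> _ a b _ ab _ _; rewrite big_nil subr_ge0.
rewrite ltnS => size_ys a b /andP[x0_ys uniq_ys] ab inside disjoint.
have [a_lo [lo_hi hi_b]] := inside x0 (mem_head _ _).
have in_ys y : y \in ys -> y \in x0 :: ys by rewrite inE => ->; rewrite orbT.
have filter_shorter (Q : pred I) : (size [seq y <- ys | Q y] < n)%N.
  by rewrite size_filter (leq_ltn_trans (count_size _ _)).
rewrite big_cons (bigID (fun y => hi y <= lo x0)) /=.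
have left : \sum_(y <- ys | hi y <= lo x0) (hi y - lo y) <= lo x0 - a.
  rewrite -big_filter; apply: IH => //; first exact: filter_uniq.
    by move=> y; rewrite mem_filter => /andP[hy /in_ys /inside[? []]].
  by move=> y z; rewrite !mem_filter => /andP[_ /in_ys yP] /andP[_ /in_ys zP]; apply: disjoint.
have right : \sum_(y <- ys | ~~ (hi y <= lo x0)) (hi y - lo y) <= b - hi x0.
  rewrite -big_filter; apply: IH => //; first exact: filter_uniq.
    move=> y; rewrite mem_filter => /andP[hy yP]; have [_ [? ?]] := inside y (in_ys _ yP).
    have y_x0 : x0 != y by apply: contraNneq x0_ys => ->.
    by case: (disjoint x0 y (mem_head _ _) (in_ys _ yP) y_x0) => // h; rewrite h in hy.
  by move=> y z; rewrite !mem_filter => /andP[_ /in_ys yP] /andP[_ /in_ys zP]; apply: disjoint.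
lra.
Qed.

Lemma sum_sq_disjoint_intervals_le xs lo hi (a b m : R) : uniq xs -> a <= b -> 0 <= m ->
  {in xs, forall x, [/\ a <= lo x, lo x <= hi x, hi x <= b & hi x - lo x <= m]} ->
  {in xs &, forall x y, x != y -> hi x <= lo y \/ hi y <= lo x} ->
  \sum_(x <- xs) (hi x - lo x) ^+ 2 <= m * (b - a).
Proof.
move=> uniq_xs ab m_ge0 inside disjoint.
apply: (@le_trans _ _ (\sum_(x <- xs) m * (hi x - lo x))).
  rewrite big_seq [leRHS]big_seq; apply: ler_sum => x /inside[_ lo_hi _ len].
  by rewrite expr2 ler_wpM2r // subr_ge0.
rewrite -mulr_sumr ler_wpM2l //.
by apply: sum_disjoint_intervals_le => // x /inside[].
Qed.

End IntervalPacking.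

Lemma sum_partition_seq (V : nmodType) (I J : eqType) (r : seq I) (t : seq J)
    (C : pred I) (f : I -> J) (F : I -> V) :
  uniq t -> {in r, forall i, C i -> f i \in t} ->
  \sum_(i <- r | C i) F i = \sum_(j <- t) \sum_(i <- r | C i && (f i == j)) F i.
Proof.
move=> uniq_t f_t; under [RHS]eq_bigr do rewrite big_mkcondr.
rewrite exchange_big /= big_seq_cond [RHS]big_seq_cond; apply: eq_bigr => i /andP[ir Ci].
rewrite (bigD1_seq (f i)) ?f_t //= eqxx big1 ?addr0 // => j.
by rewrite eq_sym => /negbTE ->.
Qed.

(* A transmitter at distance a from s, on side sx, with range r, covers the step from
   distance i to distance o on side b: on side b it stands no farther out than i and reaches
   o, from the other side it reaches across s to o.  Sides are booleans (here [s < p]). *)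
Definition covers (R : realDomainType) (sx : bool) (a r : R) (b : bool) (i o : R) : bool :=
  if b == sx then (a <= i) && (o <= a + r) else o <= r - a.

Section CoveredSteps.
Variables (R : realFieldType) (I : eqType) (d : R) (side : I -> bool) (inn out : I -> R).
Variable xs : seq I.
Hypotheses (uniq_xs : uniq xs)
  (interval_xs : {in xs, forall p, [/\ 0 <= inn p, inn p <= out p & out p - inn p <= d * out p]})
  (disjoint_xs : {in xs &, forall p q, p != q -> side p = side q ->
                    out p <= inn q \/ out q <= inn p}).

Lemma sum_sq_side_le (Q : pred I) (b : bool) (lo hi m : R) : lo <= hi -> 0 <= m ->
  {in xs, forall p, Q p -> [/\ side p = b, lo <= inn p, out p <= hi & out p - inn p <= m]} ->
  \sum_(p <- xs | Q p) (out p - inn p) ^+ 2 <= m * (hi - lo).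
Proof.
move=> lo_hi m_ge0 inside; rewrite -big_filter.
apply: sum_sq_disjoint_intervals_le => //; first exact: filter_uniq.
  move=> p; rewrite mem_filter => /andP[Qp pP].
  by have [_ ? ? ?] := inside p pP Qp; have [_ ? _] := interval_xs pP.
move=> p q; rewrite !mem_filter => /andP[Qp pP] /andP[Qq qP] pq.
have [sp _ _ _] := inside p pP Qp; have [sq _ _ _] := inside q qP Qq.
by apply: disjoint_xs; rewrite ?sp ?sq.
Qed.

Lemma step_length_le p (h : R) : 0 <= d -> p \in xs -> out p <= h -> out p - inn p <= d * h.
Proof.
move=> d_ge0 pP out_h; have [_ _ len] := interval_xs pP.
by apply: le_trans len _; rewrite ler_wpM2l.
Qed.

Variables (sx : bool) (a r : R).
Hypothesis covered_xs : {in xs, forall p, covers sx a r (side p) (inn p) (out p)}.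

Lemma covered_same_side p : p \in xs -> side p = sx -> a <= inn p /\ out p <= a + r.
Proof. by move=> /covered_xs + sp; rewrite /covers sp eqxx => /andP. Qed.

Lemma covered_other_side p : p \in xs -> side p = ~~ sx -> out p <= r - a.
Proof. by move=> /covered_xs + sp; rewrite /covers sp; case: (sx). Qed.

Lemma sum_sq_covered_le : 0 <= d -> 0 <= a -> 0 <= r ->
  \sum_(p <- xs) (out p - inn p) ^+ 2 <= (1 + d) * r ^+ 2.
Proof.
move=> d_ge0 a_ge0 r_ge0.
rewrite (bigID (fun p => side p == sx)) /=.
have same : \sum_(p <- xs | side p == sx) (out p - inn p) ^+ 2 <= r * (a + r - a).
  apply: (sum_sq_side_le (b := sx)); [lra | lra |].
  move=> p pP /eqP sp; have [ai o_le] := covered_same_side pP sp.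
  by have [_ io _] := interval_xs pP; split => //; lra.
have other : \sum_(p <- xs | side p != sx) (out p - inn p) ^+ 2 <= d * r * (r - 0).
  apply: (sum_sq_side_le (b := ~~ sx)); [lra | apply: mulr_ge0; lra |].
  move=> p pP /negPf sp; have sp' : side p = ~~ sx by move: sp; case: (side p); case: (sx).
  have o_le := covered_other_side pP sp'; have [i0 _ _] := interval_xs pP.
  have o_le_r : out p <= r by lra.
  by split => //; apply: step_length_le.
lra.
Qed.

Variables (sE : bool) (e D : R).
Hypothesis gap_xs : {in xs, forall p, side p = sE -> out p <= e \/ D <= inn p}.

Lemma sum_sq_covered_star_same_side_le : sE = sx -> 1 / 2 < d -> d < 1 ->
  0 <= a -> a <= e -> e <= (1 - d) * D -> D <= a + r ->
  D ^+ 2 + \sum_(p <- xs) (out p - inn p) ^+ 2 <= c_star d * r ^+ 2.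
Proof.
move=> sE_sx d_gt_half d_lt1 a_ge0 a_le e_le D_le.
have d_ge0 : 0 <= d by lra.
have a_le_r : a <= r by nra.
rewrite (bigID (fun p => side p == sx)) (bigID (fun p => out p <= e) (fun p => side p == sx)) /=.
have below : \sum_(p <- xs | (side p == sx) && (out p <= e)) (out p - inn p) ^+ 2
    <= d * e * (e - a).
  apply: (sum_sq_side_le (b := sx)); [lra | apply: mulr_ge0; lra |].
  move=> p pP /andP[/eqP sp o_e]; have [ai _] := covered_same_side pP sp.
  by split => //; apply: step_length_le.
have above : \sum_(p <- xs | (side p == sx) && ~~ (out p <= e)) (out p - inn p) ^+ 2
    <= d * (a + r) * (a + r - D).
  apply: (sum_sq_side_le (b := sx)); [lra | apply: mulr_ge0; lra |].
  move=> p pP /andP[/eqP sp o_e]; have [_ o_le] := covered_same_side pP sp.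
  have [o_le_e|D_le_i] := gap_xs pP (etrans sp (esym sE_sx)); first by rewrite o_le_e in o_e.
  by split => //; apply: step_length_le.
have other : \sum_(p <- xs | side p != sx) (out p - inn p) ^+ 2 <= d * (r - a) * (r - a - 0).
  apply: (sum_sq_side_le (b := ~~ sx)); [lra | apply: mulr_ge0; lra |].
  move=> p pP /negPf sp; have sp' : side p = ~~ sx by move: sp; case: (side p); case: (sx).
  have o_le := covered_other_side pP sp'; have [i0 _ _] := interval_xs pP.
  by split => //; apply: step_length_le.
have := star_same_side_le d_gt_half d_lt1 a_ge0 a_le e_le D_le.
lra.
Qed.

Lemma sum_sq_covered_star_other_side_le : sE = ~~ sx -> 1 / 2 < d -> d < 1 ->
  0 <= a -> 0 <= e -> e <= (1 - d) * D -> D <= r - a ->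
  D ^+ 2 + \sum_(p <- xs) (out p - inn p) ^+ 2 <= c_star d * r ^+ 2.
Proof.
move=> sE_sx d_gt_half d_lt1 a_ge0 e_ge0 e_le D_le.
have d_ge0 : 0 <= d by lra.
have D_ge0 : 0 <= D by nra.
have other_side p : side p != sx -> side p = sE.
  by rewrite sE_sx; case: (side p); case: (sx).
rewrite (bigID (fun p => side p == sx)) [X in _ + (_ + X)](bigID (fun p => out p <= e)) /=.
have same : \sum_(p <- xs | side p == sx) (out p - inn p) ^+ 2 <= d * (a + r) * (a + r - a).
  apply: (sum_sq_side_le (b := sx)); [lra | apply: mulr_ge0; lra |].
  move=> p pP /eqP sp; have [ai o_le] := covered_same_side pP sp.
  by split => //; apply: step_length_le.
have below : \sum_(p <- xs | (side p != sx) && (out p <= e)) (out p - inn p) ^+ 2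
    <= d * e * (e - 0).
  apply: (sum_sq_side_le (b := sE)); [lra | apply: mulr_ge0; lra |].
  move=> p pP /andP[/other_side sp o_e]; have [i0 _ _] := interval_xs pP.
  by split => //; apply: step_length_le.
have above : \sum_(p <- xs | (side p != sx) && ~~ (out p <= e)) (out p - inn p) ^+ 2
    <= d * (r - a) * (r - a - D).
  apply: (sum_sq_side_le (b := sE)); [lra | apply: mulr_ge0; lra |].
  move=> p pP /andP[/other_side sp o_e].
  have o_le := covered_other_side pP (etrans sp sE_sx).
  have [o_le_e|D_le_i] := gap_xs pP sp; first by rewrite o_le_e in o_e.
  by split => //; apply: step_length_le.
have := star_other_side_le d_gt_half d_lt1 a_ge0 D_ge0 D_le e_ge0 e_le.
lra.
Qed.

Lemma sum_sq_covered_star_le : 1 / 2 < d -> d < 1 -> 0 <= a -> 0 <= e ->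
  e <= (1 - d) * D -> covers sx a r sE e D ->
  D ^+ 2 + \sum_(p <- xs) (out p - inn p) ^+ 2 <= c_star d * r ^+ 2.
Proof.
move=> d_gt_half d_lt1 a_ge0 e_ge0 e_le; rewrite /covers.
case: eqP => [sE_sx /andP[a_le D_le] | /eqP sE_sx D_le].
  exact: sum_sq_covered_star_same_side_le.
apply: sum_sq_covered_star_other_side_le => //.
by move: sE_sx; case: (sE); case: (sx).
Qed.

End CoveredSteps.

Section Line.
Variable R : realType.
Implicit Types (P : seq R) (s p q x y : R) (rho : R -> R).

Lemma distE_le x y : x <= y -> dist x y = y - x.
Proof. by move=> xy; rewrite /dist distrC ger0_norm // subr_ge0. Qed.

Lemma distE_ge x y : y <= x -> dist x y = x - y.
Proof. by move=> yx; rewrite /dist ger0_norm // subr_ge0. Qed.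

Lemma dist_ge0 x y : 0 <= dist x y.
Proof. exact: normr_ge0. Qed.

Lemma distxx x : dist x x = 0.
Proof. by rewrite /dist subrr normr0. Qed.

Lemma dist_eq0 x y : dist x y = 0 -> x = y.
Proof. by move/eqP; rewrite normr_eq0 subr_eq0 => /eqP. Qed.

Lemma dist_opposite s x y : (s < x) != (s < y) -> dist x y = dist s x + dist s y.
Proof.
case: (ltP s x) => sx; case: (ltP s y) => sy //= _.
  rewrite (distE_ge (_ : y <= x)) ?(distE_le (ltW sx)) ?(distE_ge sy); lra.
rewrite (distE_le (_ : x <= y)) ?(distE_ge sx) ?(distE_le (ltW sy)); lra.
Qed.

Lemma dist_same_side s x y : (s < x) = (s < y) -> dist s x <= dist s y ->
  dist x y = dist s y - dist s x.
Proof.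
case: (ltP s x) => sx; case: (ltP s y) => sy //= _.
  rewrite (distE_le (ltW sx)) (distE_le (ltW sy)) => xy.
  rewrite distE_le; lra.
rewrite (distE_ge sx) (distE_ge sy) => yx.
rewrite distE_ge; lra.
Qed.

Definition next_away P s p q : Prop :=
  [/\ q \in P, p = s \/ (s < p) = (s < q), dist s p < dist s q &
      {in P, forall y, (s < y) = (s < q) -> dist s p < dist s y -> dist s q <= dist s y}].

Lemma next_away_dist P s p q : next_away P s p q -> dist p q = dist s q - dist s p.
Proof.
case=> _ [-> | side_pq] pq _; first by rewrite distxx subr0.
by rewrite (dist_same_side side_pq) // ltW.
Qed.

Lemma next_away_disjoint P s p q p' q' : p \in P -> p' \in P -> p != p' ->
  (s < q) = (s < q') -> next_away P s p q -> next_away P s p' q' ->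
  dist s q <= dist s p' \/ dist s q' <= dist s p.
Proof.
move=> pP p'P pp' side_qq' [_ p_ray _ gap] [_ p'_ray _ gap'].
have p_ge0 := dist_ge0 s p; have p'_ge0 := dist_ge0 s p'.
case: (ltgtP (dist s p) (dist s p')) => cmp.
- left; apply: gap => //; case: p'_ray => [p's | ->] //.
  by rewrite p's distxx in cmp; lra.
- right; apply: gap' => //; case: p_ray => [ps | ->] //.
  by rewrite ps distxx in cmp; lra.
- exfalso; move/eqP: pp'; apply.
  case: p_ray => [ps | side_p]; first by move: cmp; rewrite ps distxx => /esym/dist_eq0.
  case: p'_ray => [p's | side_p']; first by move: cmp; rewrite p's distxx => /dist_eq0.
  apply: dist_eq0; rewrite (dist_same_side (s := s)) ?cmp ?subrr //.
  by rewrite side_p side_qq' side_p'.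
Qed.

Lemma feasible_cut P s rho (U : pred R) q : feasible P s rho -> q \in P -> U q -> ~~ U s ->
  exists x y, [/\ x \in P, ~~ U x, U y & induced_edge rho x y].
Proof.
move=> [_ [par [par_edge reach_s]]] qP Uq Us.
have [n] := reach_s q qP.
elim: n q qP Uq => [|n IH] y yP Uy; first by move=> ys; rewrite -ys Uy in Us.
rewrite iterSr => reach.
have ys : y != s by apply: contraNneq Us => <-.
have [pyP edge] := par_edge y yP ys.
case U_py: (U (par y)); first exact: IH reach.
by exists (par y), y; rewrite U_py.
Qed.

Lemma next_away_covered P s rho p q : feasible P s rho -> next_away P s p q ->
  exists2 x, x \in P & covers (s < x) (dist s x) (rho x) (s < q) (dist s p) (dist s q).
Proof.
move=> feas [qP _ pq gap].
pose U y := ((s < y) == (s < q)) && (dist s q <= dist s y).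
have Uq : U q by rewrite /U !eqxx lexx.
have Us : ~~ U s.
  by rewrite /U distxx negb_and -ltNge (le_lt_trans (dist_ge0 s p) pq) orbT.
have [x [y [xP Ux /andP[/eqP side_y qy] edge]]] := feasible_cut feas qP Uq Us.
exists x => //; rewrite /covers; move: edge; rewrite /induced_edge.
case: eqP => [side_x | /eqP side_x] edge.
- move: Ux; rewrite /U side_x eqxx /= -ltNge => xq.
  have xp : dist s x <= dist s p.
    by rewrite leNgt; apply/negP => /(gap x xP (esym side_x)); rewrite leNgt xq.
  have : dist s y <= dist s x + dist x y := ler_distD x s y.
  by rewrite xp /=; lra.
- rewrite (dist_opposite (s := s)) in edge; last by rewrite side_y eq_sym.
  lra.
Qed.

End Line.

Lemma bigmin_in (disp : Order.disp_t) (T : orderType disp) (I : eqType) (r : seq I)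
    (Q : pred I) (F : I -> T) (x0 : T) :
  \big[Order.min/x0]_(i <- r | Q i) F i \in x0 :: [seq F i | i <- r & Q i].
Proof.
rewrite big_seq_cond; apply: (big_ind (fun m => m \in x0 :: _)) => [|x y|i /andP[ir Qi]].
- exact: mem_head.
- by rewrite minEle; case: ifP.
- by rewrite inE map_f ?orbT // mem_filter Qi.
Qed.

Lemma bigmax_in (disp : Order.disp_t) (T : orderType disp) (I : eqType) (r : seq I)
    (Q : pred I) (F : I -> T) (x0 : T) :
  \big[Order.max/x0]_(i <- r | Q i) F i \in x0 :: [seq F i | i <- r & Q i].
Proof.
rewrite big_seq_cond; apply: (big_ind (fun m => m \in x0 :: _)) => [|x y|i /andP[ir Qi]].
- exact: mem_head.
- by rewrite maxEle; case: ifP.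
- by rewrite inE map_f ?orbT // mem_filter Qi.
Qed.

Section Successors.
Variable R : realType.
Implicit Types (P : seq R) (s p q : R).

Lemma sucR_spec P p q : sucR P p = Some q ->
  [/\ q \in P, p < q & {in P, forall y, p < y -> q <= y}].
Proof.
rewrite /sucR; case E: [seq x <- P | p < x] => [|x0 l] //= [<-].
have mem_l y : (y \in x0 :: l) = (p < y) && (y \in P) by rewrite -E mem_filter.
have : \big[Num.min/x0]_(x <- x0 :: l) x \in x0 :: l.
  have := bigmin_in (x0 :: l) xpredT id x0; rewrite filter_predT map_id inE.
  by case/predU1P => [->|]; rewrite ?mem_head.
rewrite mem_l => /andP[pq qP]; split => // y yP py.
by apply: ge_bigmin_seq; rewrite // mem_l py.
Qed.

Lemma sucL_spec P p q : sucL P p = Some q ->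
  [/\ q \in P, q < p & {in P, forall y, y < p -> y <= q}].
Proof.
rewrite /sucL; case E: [seq x <- P | x < p] => [|x0 l] //= [<-].
have mem_l y : (y \in x0 :: l) = (y < p) && (y \in P) by rewrite -E mem_filter.
have : \big[Num.max/x0]_(x <- x0 :: l) x \in x0 :: l.
  have := bigmax_in (x0 :: l) xpredT id x0; rewrite filter_predT map_id inE.
  by case/predU1P => [->|]; rewrite ?mem_head.
rewrite mem_l => /andP[qp qP]; split => // y yP yp.
by apply: le_bigmax_seq; rewrite // mem_l yp.
Qed.

Lemma next_away_sucR P s p q : s <= p -> sucR P p = Some q -> next_away P s p q /\ s < q.
Proof.
move=> sp /sucR_spec[qP pq q_min]; have sq := le_lt_trans sp pq.
rewrite /next_away (distE_le sp) (distE_le (ltW sq)); split=> //; split.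
- exact: qP.
- by case: (ltP s p) => [_ | ps]; [right; rewrite sq | left; apply/eqP; rewrite eq_le ps sp].
- lra.
- move=> y yP; rewrite sq => sy; rewrite (distE_le (ltW sy)) => py.
  by have := q_min y yP; lra.
Qed.

Lemma next_away_sucL P s p q : p <= s -> sucL P p = Some q -> next_away P s p q /\ q < s.
Proof.
move=> ps /sucL_spec[qP qp q_max]; have qs := lt_le_trans qp ps.
have s_q : (s < q) = false by rewrite ltNge (ltW qs).
rewrite /next_away (distE_ge ps) (distE_ge (ltW qs)) s_q; split=> //; split.
- exact: qP.
- case: (ltP p s) => [ps' | sp]; last by left; apply/eqP; rewrite eq_le ps sp.
  by right; rewrite ltNge (ltW ps').
- lra.
- move=> y yP /negbT; rewrite -leNgt => ys; rewrite (distE_ge ys) => py.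
  by have := q_max y yP; lra.
Qed.

Lemma next_away_suc P s p q : suc P s p = Some q -> next_away P s p q /\ (s < q) = (s < p).
Proof.
rewrite /suc; case: (ltP s p) => [sp | ps].
  by case/(next_away_sucR (ltW sp)) => ? ->.
by case/(next_away_sucL ps) => ? qs; rewrite ltNge (ltW qs).
Qed.

Lemma next_away_sucs P s p q : q \in sucs P s p -> next_away P s p q.
Proof.
rewrite /sucs; case: eqP => [-> | _]; last first.
  by case eS: (suc P s p) => [q'|] //; rewrite inE => /eqP ->; case: (next_away_suc eS).
rewrite mem_cat => /orP[].
  by case eR: (sucR P s) => [qR|] //; rewrite inE => /eqP ->; case: (next_away_sucR (lexx s) eR).
by case eL: (sucL P s) => [qL|] //; rewrite inE => /eqP ->; case: (next_away_sucL (lexx s) eL).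
Qed.

Lemma expensive_sucs_le P s d p q : d <= 1 -> expensive P s d p -> q \in sucs P s p ->
  dist s p <= (1 - d) * dist s q.
Proof.
move=> d_le1; have [-> _ _ | ps] := eqVneq p s.
  by rewrite distxx mulr_ge0 ?dist_ge0 // subr_ge0.
rewrite /expensive /sucs (negbTE ps) /=.
case eS: (suc P s p) => [q'|] // lt; rewrite inE => /eqP ->.
have [step _] := next_away_suc eS.
by move: lt; rewrite (next_away_dist step); lra.
Qed.

End Successors.

Section SourceBased.
Variables (R : realType) (P : seq R) (s d : R).
Implicit Types (p q x : R).

Definition cheap_nonextreme p := [&& p != s, ~~ expensive P s d p & suc P s p != None].

Definition suc_dist p := if suc P s p is Some q then dist s q else 0.

Lemma cheap_nonextremeP p : cheap_nonextreme p ->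
  exists2 q, suc P s p = Some q & [/\ p != s, dist p q <= d * dist s q & suc_dist p = dist s q].
Proof.
case/and3P => ps; rewrite /expensive (negbTE ps) /suc_dist /=.
by case: (suc P s p) => [q|] // + _; rewrite -leNgt => cheap; exists q.
Qed.

Lemma cheap_interval p : cheap_nonextreme p ->
  [/\ 0 <= dist s p, dist s p <= suc_dist p & suc_dist p - dist s p <= d * suc_dist p].
Proof.
case/cheap_nonextremeP => q /next_away_suc[step _] [_ cheap ->].
have [_ _ pq _] := step; rewrite -(next_away_dist step).
by rewrite dist_ge0 (ltW pq).
Qed.

Lemma rho_sb_cheap p : cheap_nonextreme p -> rho_sb P s d p = suc_dist p - dist s p.
Proof.
move=> c; have [q e_suc [ps _ ->]] := cheap_nonextremeP c.
have [step _] := next_away_suc e_suc.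
move: c => /and3P[_ /negbTE cheap _].
by rewrite /rho_sb (negbTE ps) cheap /rho_st e_suc (next_away_dist step).
Qed.

Lemma cost2_rho_sb : uniq P -> s \in P -> cost2 P (rho_sb P s d) =
  dmax P s d ^+ 2 + \sum_(p <- P | cheap_nonextreme p) (suc_dist p - dist s p) ^+ 2.
Proof.
move=> uniq_P s_P; rewrite /cost2 (bigD1_seq s) //= {1}/rho_sb eqxx; congr (_ + _).
rewrite big_mkcond [RHS]big_mkcond /=; apply: eq_bigr => p _.
have [c | ] := boolP (cheap_nonextreme p).
  by have [q _ [ps _ _]] := cheap_nonextremeP c; rewrite ps rho_sb_cheap.
rewrite /cheap_nonextreme /rho_sb; case: eqP => //= _.
by case: (expensive P s d p) => //=; rewrite /rho_st; case: (suc P s p); rewrite ?expr0n.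
Qed.

Lemma cheap_next_away p : cheap_nonextreme p ->
  exists2 q, next_away P s p q & (s < q) = (s < p) /\ suc_dist p = dist s q.
Proof.
by case/cheap_nonextremeP => q /next_away_suc[step side_q] [_ _ ->]; exists q.
Qed.

Lemma cheap_disjoint p p' : p \in P -> p' \in P -> cheap_nonextreme p -> cheap_nonextreme p' ->
  p != p' -> (s < p) = (s < p') -> suc_dist p <= dist s p' \/ suc_dist p' <= dist s p.
Proof.
move=> pP p'P /cheap_next_away[q step [side_q ->]] /cheap_next_away[q' step' [side_q' ->]] pp' side.
by apply: (next_away_disjoint pP p'P pp' _ step step'); rewrite side_q side_q' side.
Qed.

Lemma cheap_covered rho p : feasible P s rho -> cheap_nonextreme p ->
  exists2 x, x \in P & covers (s < x) (dist s x) (rho x) (s < p) (dist s p) (suc_dist p).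
Proof.
move=> feas /cheap_next_away[q step [side_q ->]]; rewrite -side_q.
exact: next_away_covered feas step.
Qed.

Lemma dmax_attained : dmax P s d != 0 ->
  exists pst E, [/\ pst \in P, expensive P s d pst, E \in sucs P s pst & dmax P s d = dist s E].
Proof.
move=> dmax_neq0; have := bigmax_in P (expensive P s d)
  (fun p => \big[Num.max/0]_(q <- sucs P s p) dist s q) 0.
rewrite -/(dmax P s d) inE (negbTE dmax_neq0) /= => /mapP[pst].
rewrite mem_filter => /andP[exp_pst pstP] dmax_pst; rewrite dmax_pst in dmax_neq0.
have : dmax P s d \in 0 :: [seq dist s q | q <- sucs P s pst].
  by rewrite dmax_pst; move: (bigmax_in (sucs P s pst) xpredT (dist s) 0); rewrite filter_predT.
rewrite inE dmax_pst (negbTE dmax_neq0) /= -dmax_pst => /mapP[E E_suc dmax_E].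
by exists pst, E; split.
Qed.

Lemma star_gap p pst E : p \in P -> pst \in P -> cheap_nonextreme p -> expensive P s d pst ->
  next_away P s pst E -> (s < p) = (s < E) -> suc_dist p <= dist s pst \/ dist s E <= dist s p.
Proof.
move=> pP pstP c exp_pst stepE side.
have p_pst : p != pst by case/and3P: c => _ + _; apply: contraNneq => ->.
case/cheap_next_away: c => q step [side_q ->].
by apply: (next_away_disjoint pP pstP p_pst _ step stepE); rewrite side_q side.
Qed.

End SourceBased.

Section Charges.
Variables (R : realType) (P : seq R) (s d : R) (rho : R -> R).
Hypotheses (uniq_P : uniq P) (s_P : s \in P) (feas : feasible P s rho).
Implicit Types (p x : R).

Definition covers_cheap x p :=
  covers (s < x) (dist s x) (rho x) (s < p) (dist s p) (suc_dist P s p).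

Definition coverer p := nth s P (find (covers_cheap^~ p) P).

Lemma coverer_spec p : cheap_nonextreme P s d p ->
  coverer p \in P /\ covers_cheap (coverer p) p.
Proof.
move=> c; have [x xP cov] := cheap_covered feas c.
have has_cov : has (covers_cheap^~ p) P by apply/hasP; exists x.
by rewrite /coverer mem_nth -?has_find //; split => //; exact: (nth_find s has_cov).
Qed.

Definition charged x := [seq p <- P | cheap_nonextreme P s d p & coverer p == x].

Definition charge x := \sum_(p <- charged x) (suc_dist P s p - dist s p) ^+ 2.

Lemma charged_spec x p : p \in charged x ->
  [/\ p \in P, cheap_nonextreme P s d p & coverer p = x].
Proof. by rewrite mem_filter => /andP[/andP[c /eqP <-] pP]. Qed.

Lemma charged_uniq x : uniq (charged x).
Proof. exact: filter_uniq. Qed.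

Lemma charged_interval x : {in charged x, forall p, [/\ 0 <= dist s p,
  dist s p <= suc_dist P s p & suc_dist P s p - dist s p <= d * suc_dist P s p]}.
Proof. by move=> p /charged_spec[_ c _]; apply: cheap_interval. Qed.

Lemma charged_disjoint x : {in charged x &, forall p p', p != p' -> (s < p) = (s < p') ->
  suc_dist P s p <= dist s p' \/ suc_dist P s p' <= dist s p}.
Proof.
by move=> p p' /charged_spec[pP c _] /charged_spec[p'P c' _]; exact: cheap_disjoint pP p'P c c'.
Qed.

Lemma charged_covered x : {in charged x, forall p,
  covers (s < x) (dist s x) (rho x) (s < p) (dist s p) (suc_dist P s p)}.
Proof. by move=> p /charged_spec[_ c <-]; case: (coverer_spec c). Qed.

Lemma rho_ge0 x : x \in P -> 0 <= rho x.
Proof. by case: feas => + _; apply. Qed.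

Lemma charge_le x : 0 <= d -> x \in P -> charge x <= (1 + d) * rho x ^+ 2.
Proof.
move=> d_ge0 xP.
apply: (sum_sq_covered_le (side := fun p => s < p) (@charged_uniq x) (@charged_interval x)
  (@charged_disjoint x) (@charged_covered x) d_ge0 (dist_ge0 _ _) (rho_ge0 xP)).
Qed.

Lemma star_charge_le : 1 / 2 < d -> d < 1 ->
  exists2 x, x \in P & dmax P s d ^+ 2 + charge x <= c_star d * rho x ^+ 2.
Proof.
move=> d_gt_half d_lt1.
have [dmax0 | /dmax_attained[pst [E [pstP exp_pst E_suc ->]]]] := eqVneq (dmax P s d) 0.
  exists s => //; rewrite dmax0 expr0n add0r.
  apply: le_trans (charge_le _ s_P) _; first lra.
  by rewrite ler_wpM2r ?sqr_ge0 ?one_add_le_c_star.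
have stepE := next_away_sucs E_suc.
have [x xP cov] := next_away_covered feas stepE.
exists x => //.
have gap : {in charged x, forall p, (s < p) = (s < E) ->
    suc_dist P s p <= dist s pst \/ dist s E <= dist s p}.
  by move=> p /charged_spec[pP c _]; exact: star_gap pP pstP c exp_pst stepE.
apply: (sum_sq_covered_star_le (side := fun p => s < p) (@charged_uniq x)
  (@charged_interval x) (@charged_disjoint x) (@charged_covered x) gap d_gt_half d_lt1
  (dist_ge0 _ _) (dist_ge0 _ _) _ cov).
exact: expensive_sucs_le (ltW d_lt1) exp_pst E_suc.
Qed.

Lemma cost2_rho_sb_charge :
  cost2 P (rho_sb P s d) = dmax P s d ^+ 2 + \sum_(x <- P) charge x.
Proof.
rewrite cost2_rho_sb // (sum_partition_seq (f := coverer) _ uniq_P).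
  by congr (_ + _); apply: eq_bigr => x _; rewrite /charge big_filter.
by move=> p _ /coverer_spec[].
Qed.

End Charges.

Theorem lemma12 (R : realType) (P : seq R) (s delta : R)
  (hP : uniq P) (hs : s \in P) (hd1 : 1 / 2 < delta) (hd2 : delta < 1)
  (rho_opt : R -> R) (hopt : optimal P s rho_opt) :
  cost2 P (rho_sb P s delta) <= c_delta delta * cost2 P rho_opt.
Proof.
have [feas _] := hopt.
have d_ge0 : 0 <= delta by lra.
have [x xP star] := star_charge_le hP hs feas hd1 hd2.
rewrite (cost2_rho_sb_charge delta hP hs feas) (bigD1_seq x) //= addrA.
rewrite /cost2 mulr_sumr (bigD1_seq x) //=; apply: lerD.
  by apply: le_trans star _; rewrite ler_wpM2r ?sqr_ge0 ?c_star_le_c_delta.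
rewrite big_seq_cond [leRHS]big_seq_cond; apply: ler_sum => y /andP[yP _].
apply: le_trans (charge_le hP feas d_ge0 yP) _.
rewrite ler_wpM2r ?sqr_ge0 //; apply: le_trans (c_star_le_c_delta _).
exact: one_add_le_c_star.
Qed.
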